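(* Let $\lambda^1,\dots,\lambda^N$ be loss functions such that each $\lambda^n$ is proper and $\eta^n$-mixable for some $\eta^n>0$. Consider the game: set $L_0^{(n)}:=0$, $L_0^n:=0$; at each step $t=1,2,\dots$, each Expert $n$ announces $\gamma_t^n\in[0,1]$, then Learner announces $\gamma_t\in[0,1]$, then Reality announces $\omega_t\in\{0,1\}$, and $L_t^{(n)}:=L_{t-1}^{(n)}+\lambda^n(\gamma_t,\omega_t)$, $L_t^n:=L_{t-1}^n+\lambda^n(\gamma_t^n,\omega_t)$ for $n=1,\dots,N$. Then Learner has a strategy guaranteeing, for all $T$ and all $n=1,\dots,N$, $$L_T^{(n)}\le L_T^n+\frac{\ln N}{\eta^n}.$$
   Context: A loss function is a map $\lambda:[0,1]\times\{0,1\}\to[0,\infty]$ satisfying: (1) $\lambda(\gamma,0)$ and $\lambda(\gamma,1)$ are continuous in $\gamma\in[0,1]$ (standard topology on $[0,\infty]$); (2) some $\gamma$ has $\lambda(\gamma,0),\lambda(\gamma,1)$ both finite; (3) no $\gamma$ has both infinite. Superprediction set: $\Sigma_\lambda=\{(x,y)\in[0,\infty)^2:\exists\gamma\ \lambda(\gamma,0)\le x,\ \lambda(\gamma,1)\le y\}$. For $\eta>0$, $\lambda$ is $\eta$-mixable if $\{(e^{-\eta x},e^{-\eta y}):(x,y)\in\Sigma_\lambda\}$ is convex. $\lambda$ is proper if $\pi\lambda(\pi,1)+(1-\pi)\lambda(\pi,0)\le\pi\lambda(\pi',1)+(1-\pi)\lambda(\pi',0)$ for all $\pi,\pi'\in[0,1]$.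 *)

From HB Require Import structures.
From mathcomp Require Import all_boot all_order all_algebra.
From mathcomp Require Import all_classical all_reals all_analysis.
Set Implicit Arguments. Unset Strict Implicit. Unset Printing Implicit Defensive.
Import Order.TTheory GRing.Theory Num.Theory.
Import numFieldNormedType.Exports.
Local Open Scope classical_set_scope.
Local Open Scope ring_scope.

(* Outcomes omega in {0,1} are encoded as bool: false = 0, true = 1.
   A loss function is lam : R -> bool -> \bar R, only its values on [0,1] matter. *)
Section Loss.
Variable R : realType.

Definition loss_function (lam : R -> bool -> \bar R) : Prop :=
  (forall g b, 0 <= g <= 1 -> (0 <= lam g b)%E) /\
  (forall b, {within `[0, 1], continuous (fun g => lam g b)}) /\
  (exists g, 0 <= g <= 1 /\ lam g false \is a fin_num /\ lam g true \is a fin_num) /\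
  (forall g, 0 <= g <= 1 -> ~ (lam g false = +oo%E /\ lam g true = +oo%E)).

Definition superpred (lam : R -> bool -> \bar R) : set (R * R) :=
  [set xy | 0 <= xy.1 /\ 0 <= xy.2 /\
     exists g, 0 <= g <= 1 /\ (lam g false <= xy.1%:E)%E /\ (lam g true <= xy.2%:E)%E].

Definition convex_set2 (A : set (R * R)) : Prop :=
  forall p q t, A p -> A q -> 0 <= t <= 1 ->
    A (t * p.1 + (1 - t) * q.1, t * p.2 + (1 - t) * q.2).

Definition mixable (eta : R) (lam : R -> bool -> \bar R) : Prop :=
  convex_set2 ((fun xy : R * R => (expR (- eta * xy.1), expR (- eta * xy.2)))
                 @` superpred lam).

Definition proper_loss (lam : R -> bool -> \bar R) : Prop :=
  forall p p', 0 <= p <= 1 -> 0 <= p' <= 1 ->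
    (p%:E * lam p true + (1 - p)%:E * lam p false <=
     p%:E * lam p' true + (1 - p)%:E * lam p' false)%E.

(* A Learner strategy maps the history (experts' predictions at steps 0..t,
   outcomes at steps 0..t-1) to the Learner's prediction at step t. *)
Definition learner_pred (N : nat) (S : seq ('I_N -> R) -> seq bool -> R)
  (g : nat -> 'I_N -> R) (w : nat -> bool) (t : nat) : R :=
  S (mkseq g t.+1) (mkseq w t).

Definition learner_loss (N : nat) (lam : 'I_N -> R -> bool -> \bar R)
  (S : seq ('I_N -> R) -> seq bool -> R)
  (g : nat -> 'I_N -> R) (w : nat -> bool) (T : nat) (n : 'I_N) : \bar R :=
  (\sum_(t < T) lam n (learner_pred S g w t) (w t))%E.

Definition expert_loss (N : nat) (lam : 'I_N -> R -> bool -> \bar R)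
  (g : nat -> 'I_N -> R) (w : nat -> bool) (T : nat) (n : 'I_N) : \bar R :=
  (\sum_(t < T) lam n (g t n) (w t))%E.
End Loss.

From HB Require Import structures.
From mathcomp Require Import all_boot all_order all_algebra.
From mathcomp Require Import all_classical all_reals all_analysis.
From mathcomp Require Import ring lra.
Set Implicit Arguments.
Unset Strict Implicit.
Unset Printing Implicit Defensive.
Import Order.TTheory GRing.Theory Num.Theory.
Import numFieldNormedType.Exports.
Local Open Scope classical_set_scope.
Local Open Scope ring_scope.

(* Give Expert n the weight W_n = exp (eta_n (L^(n) - L^n)); the claim is then
   that the total weight never exceeds its initial value N.  With
   u_n(b, g) = exp (- eta_n lam_n(g, b)), predicting g multiplies W_n by
   u_n(b, e_n) / u_n(b, g) when the outcome is b and Expert n predicted e_n.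
   Mixability and properness give, for all p and e in [0, 1],
     p u(1, e) / u(1, p) + (1 - p) u(0, e) / u(0, p) <= 1
   (the derivative at t = 0 of the exponentiated mixture of p and e), so the
   p-expected total weight after predicting p does not grow: for each p one of
   the two outcomes leaves it <= its current value.  The sets of predictions that
   are safe against outcome 0, resp. 1, are relatively closed in [0, 1], cover it
   and contain 0, resp. 1, so by connectedness some prediction is safe against
   both outcomes; Learner always plays such a prediction. *)

Section ProperLoss.
Variables (R : realType) (lam : R -> bool -> \bar R).
Hypotheses (lamF : loss_function lam) (lamP : proper_loss lam).

Lemma loss_ge0 g b : 0 <= g <= 1 -> (0 <= lam g b)%E.
Proof. by case: lamF => + _; apply. Qed.

(* If [lam p b = +oo] for an outcome [b] of positive probability under [p],
   the expected loss of [p] would be infinite, whereas properness bounds it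
   by the finite expected loss of a point where both losses are finite. *)
Lemma proper_loss_fin p b : 0 <= p <= 1 -> 0 < (if b then p else 1 - p) ->
  lam p b \is a fin_num.
Proof.
move=> p01 qb0; case: lamF => _ [_ [[g [g01 [fg0 fg1]]] _]].
have /lamP /(_ g01) := p01; apply: contraTT => lam_fin.
have lam_eqy : lam p b = +oo%E.
  by move: (loss_ge0 b p01) lam_fin; case: (lam p b).
have term_neqNy c b' : 0 <= c -> (c%:E * lam p b' != -oo)%E.
  by move=> c0; rewrite gt_eqF // (lt_le_trans _ (mule_ge0 _ (loss_ge0 b' p01))).
rewrite -ltNge; apply: (@lt_le_trans _ _ +oo%E).
  by rewrite ltey_eq fin_numD !fin_numM.
case/andP: p01 => p0 p1; case: b qb0 lam_fin lam_eqy => qb0 _ ->.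
- by rewrite gt0_muley ?lte_fin // addye // term_neqNy // subr_ge0.
- by rewrite gt0_muley ?lte_fin // addey // term_neqNy.
Qed.

Lemma loss_fin_interior p b : 0 < p < 1 -> lam p b \is a fin_num.
Proof.
case/andP=> p0 p1; apply: proper_loss_fin; first by rewrite !ltW.
by case: b; rewrite ?subr_gt0.
Qed.

End ProperLoss.

Section ExpLoss.
Variable R : realType.
Implicit Types (eta r : R) (x y : \bar R).

(* [exp (- eta x)], extended by its limit [0] at [+oo] (and by [0] at [-oo],
   which losses never take). *)
Definition exp_loss eta x : R := if x is r%:E then expR (- eta * r) else 0.

Lemma exp_loss_ge0 eta x : 0 <= exp_loss eta x.
Proof. by case: x => //= r; rewrite expR_ge0. Qed.

Lemma exp_loss_fin eta x :
  x \is a fin_num -> exp_loss eta x = expR (- eta * fine x).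
Proof. by case: x. Qed.

Lemma exp_loss_gt0 eta x : x \is a fin_num -> 0 < exp_loss eta x.
Proof. by move=> /(exp_loss_fin eta) ->; rewrite expR_gt0. Qed.

Lemma exp_loss_gt0_fin_num eta x : 0 < exp_loss eta x -> x \is a fin_num.
Proof. by case: x => //=; rewrite ltxx. Qed.

Lemma exp_loss_le eta x y : 0 < eta -> (0 <= x)%E -> (x <= y)%E ->
  exp_loss eta y <= exp_loss eta x.
Proof.
move=> eta0; case: x => [r| |] // _; last by rewrite leye_eq => /eqP ->.
case: y => [s| |] /= rs; rewrite ?expR_ge0 //.
by rewrite ler_expR !mulNr lerN2 ler_pM2l -?lee_fin.
Qed.

Lemma exp_loss_cvg eta (F : set_system R) (FF : Filter F) (f : R -> \bar R) x :
  0 < eta -> x != -oo%E -> f @ F --> x ->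
  (fun t => exp_loss eta (f t)) @ F --> exp_loss eta x.
Proof.
move=> eta0; case: x => [r| |] // _.
- move=> /fine_cvgP [f_fin f_cvg].
  have fE : \forall t \near F, expR (- eta * fine (f t)) = exp_loss eta (f t).
    by apply: filterS f_fin => t; case: (f t).
  apply: cvg_trans (near_eq_cvg fE) _.
  apply: continuous_cvg; first exact: continuous_expR.
  exact: cvgMr.
- move=> /cvgeyPge f_big; apply/cvgrPdist_lt => e e0.
  apply: filterS (f_big ((1 - ln e) / eta)) => t.
  rewrite sub0r normrN; case: (f t) => [s| |] //=; last by rewrite normr0.
  rewrite lee_fin ler_pdivrMr // ger0_norm ?expR_ge0 // => s_big.
  by rewrite -[e in _ < e](lnK e0) ltr_expR; lra.
Qed.

End ExpLoss.

Section UnitInterval.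
Variable R : realType.
Implicit Types (r c : R).

Lemma near_within01_ball r (P : R -> Prop) :
  (\forall t \near within `[0, 1] (nbhs r), P t) ->
  exists2 d : R, 0 < d & forall t, `|r - t| < d -> 0 <= t <= 1 -> P t.
Proof.
by move=> /nbhs_ballP[d /= d0 Pd]; exists d.
Qed.

Lemma near_within01_interior r (P : R -> Prop) : 0 <= r <= 1 ->
  (\forall t \near within `[0, 1] (nbhs r), P t) -> exists t, 0 < t < 1 /\ P t.
Proof.
move=> /andP[r0 r1] /near_within01_ball[d d0 Pd].
set m := Num.min (d / 2) (1 / 4).
have m0 : 0 < m by rewrite lt_min; apply/andP; split; lra.
have md : m < d by rewrite gt_min; apply/orP; left; lra.
have m14 : m <= 1 / 4 by rewrite ge_min lexx orbT.
case: (lerP r (1 / 2)) => rh; [exists (r + m) | exists (r - m)].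
- have t01 : 0 < r + m < 1 by apply/andP; split; lra.
  split=> //; apply: Pd; last by case/andP: t01 => *; rewrite !ltW.
  by rewrite (_ : r - (r + m) = - m) ?normrN ?ger0_norm ?ltW //; ring.
- have t01 : 0 < r - m < 1 by apply/andP; split; lra.
  split=> //; apply: Pd; last by case/andP: t01 => *; rewrite !ltW.
  by rewrite (_ : r - (r - m) = m) ?ger0_norm ?ltW //; ring.
Qed.

(* Connectedness of [[0, 1]]; the common point is the supremum of [P]. *)
Lemma closed_cover01_meet (P Q : R -> Prop) : P 0 -> Q 1 ->
  (forall t, 0 <= t <= 1 -> P t \/ Q t) ->
  (forall r, 0 <= r <= 1 -> ~ P r -> \forall t \near within `[0, 1] (nbhs r), ~ P t) ->
  (forall r, 0 <= r <= 1 -> ~ Q r -> \forall t \near within `[0, 1] (nbhs r), ~ Q t) ->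
  exists t, 0 <= t <= 1 /\ P t /\ Q t.
Proof.
move=> P0 Q1 PQ P_closed Q_closed.
set B := [set t | 0 <= t <= 1 /\ P t].
have B0 : B 0 by split; rewrite ?lexx ?ler01.
have B_sup : has_sup B by split; [exists 0 | exists 1 => t [/andP[_ ?] _]].
set s := sup B.
have s01 : 0 <= s <= 1.
  by rewrite sup_upper_bound //= ge_sup //; [exists 0 | move=> t [/andP[_ ?] _]].
have Ps : P s.
  apply: contrapT => /(P_closed s s01) /near_within01_ball[d d0 nP].
  have [t [t01 Pt] st] := sup_adherent d0 B_sup.
  have ts : t <= s by apply: sup_upper_bound.
  have : `|s - t| < d by rewrite -/s in st; rewrite ger0_norm; lra.
  by move/nP/(_ t01).
exists s; do 2!split=> //.
have [->//|s_neq1] := eqVneq s 1.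
have s1 : s < 1 by rewrite lt_neqAle s_neq1; case/andP: s01.
apply: contrapT => /(Q_closed s s01) /near_within01_ball[d d0 nQ].
set m := Num.min (d / 2) ((1 - s) / 2).
have m0 : 0 < m by rewrite lt_min; apply/andP; split; lra.
have [md m1] : m <= d / 2 /\ m <= (1 - s) / 2 by rewrite !ge_min !lexx orbT.
have t01 : 0 <= s + m <= 1 by apply/andP; split; lra.
have st : `|s - (s + m)| < d.
  by rewrite (_ : s - (s + m) = - m) ?normrN ?ger0_norm ?ltW //; [lra | ring].
have : s + m <= s.
  apply: sup_upper_bound => //; split=> //.
  by case: (PQ _ t01) => // Qt; case: (nQ _ st t01 Qt).
lra.
Qed.

Lemma interior01_le (f : R -> R) r c : 0 <= r <= 1 ->
  f @ within `[0, 1] (nbhs r) --> f r -> (forall t, 0 < t < 1 -> f t <= c) ->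
  f r <= c.
Proof.
move=> r01 f_cvg f_le; rewrite leNgt; apply/negP => c_lt.
have [t [t01 c_lt_t]] := near_within01_interior r01 (cvgr_gt _ f_cvg _ c_lt).
by move: (f_le t t01); rewrite leNgt c_lt_t.
Qed.

End UnitInterval.

Section PerturbedMean.
Variable R : realType.
Implicit Types (p t a : R).

Lemma div_1DM_ge t a : 0 < t <= 1 / 2 -> -1 <= a ->
  a - 2 * t * a ^+ 2 <= a / (1 + t * a).
Proof.
move=> /andP[t0 th] a1.
have den0 : 0 < 1 + t * a by nra.
rewrite ler_pdivlMr //.
have : 0 <= t * a ^+ 2 * (1 + 2 * t * a) by apply: mulr_ge0; nra.
nra.
Qed.

(* The perturbed mean is [a - O(t)], so its sign for small [t] is that of the mean. *)
Lemma mean_le0_of_perturbed p (a0 a1 : R) : 0 <= p <= 1 -> -1 <= a0 -> -1 <= a1 ->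
  (forall t, 0 < t <= 1 / 2 ->
     p * (a1 / (1 + t * a1)) + (1 - p) * (a0 / (1 + t * a0)) <= 0) ->
  p * a1 + (1 - p) * a0 <= 0.
Proof.
move=> /andP[p0 p1] a0_ge a1_ge perturbed_le0; rewrite leNgt; apply/negP => D0.
set D := p * a1 + (1 - p) * a0 in D0.
set Q := p * a1 ^+ 2 + (1 - p) * a0 ^+ 2.
have Q0 : 0 <= Q by rewrite /Q; nra.
set t := Num.min (1 / 2) (D / (4 * Q + 1)).
have t0 : 0 < t by rewrite lt_min; apply/andP; split; [lra | apply: divr_gt0; lra].
have th : t <= 1 / 2 by rewrite ge_min lexx.
have tD : t * (4 * Q + 1) <= D.
  by rewrite -ler_pdivlMr; [rewrite ge_min lexx orbT | lra].
have t01 : 0 < t <= 1 / 2 by rewrite t0 th.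
have := perturbed_le0 t t01.
have := ler_wpM2l p0 (div_1DM_ge t01 a1_ge).
have q0 : 0 <= 1 - p by lra.
have := ler_wpM2l q0 (div_1DM_ge t01 a0_ge).
rewrite /D /Q in D0 Q0 tD *; nra.
Qed.

(* The hypothesis says that [t |-> p U1/W1(t) + (1-p) U0/W0(t)], equal to [1]
   at [t = 0], stays above [1]; the conclusion is the sign of its derivative at [0]. *)
Lemma mean_ratio_le1 p (U0 U1 V0 V1 : R) : 0 <= p <= 1 ->
  0 < U0 -> 0 < U1 -> 0 <= V0 -> 0 <= V1 ->
  (forall t, 0 < t <= 1 / 2 ->
     1 <= p * (U1 / (t * V1 + (1 - t) * U1)) + (1 - p) * (U0 / (t * V0 + (1 - t) * U0))) ->
  p * (V1 / U1) + (1 - p) * (V0 / U0) <= 1.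
Proof.
move=> p01 U00 U10 V00 V10 mix_ge1.
have ratioE t U V : 0 < U -> 0 <= V -> 0 < t <= 1 / 2 ->
    1 - U / (t * V + (1 - t) * U) = t * ((V / U - 1) / (1 + t * (V / U - 1))).
  move=> U_gt0 V_ge0 /andP[t0 th]; have W_gt0 : 0 < t * V + (1 - t) * U by nra.
  have -> : 1 + t * (V / U - 1) = (t * V + (1 - t) * U) / U by field; rewrite gt_eqF.
  by field; rewrite !gt_eqF.
have ratio_ge (U V : R) : 0 < U -> 0 <= V -> -1 <= V / U - 1.
  by move=> U_gt0 V_ge0; have := divr_ge0 V_ge0 (ltW U_gt0); lra.
suff : p * (V1 / U1 - 1) + (1 - p) * (V0 / U0 - 1) <= 0 by lra.
apply: mean_le0_of_perturbed; rewrite ?ratio_ge // => t t01.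
have /andP[t0 _] := t01.
have := mix_ge1 t t01; rewrite -(pmulr_rle0 _ t0).
have E1 := ratioE t _ _ U10 V10 t01; have E0 := ratioE t _ _ U00 V00 t01.
case/andP: p01 => p0 p1; nra.
Qed.

End PerturbedMean.

Section MixableProperLoss.
Variables (R : realType) (lam : R -> bool -> \bar R) (eta : R).
Hypotheses (lamF : loss_function lam) (lamP : proper_loss lam).
Hypotheses (eta0 : 0 < eta) (lamM : mixable eta lam).

Local Notation u b g := (exp_loss eta (lam g b)).

Lemma exp_loss_cvg_within b (r : R) : 0 <= r <= 1 ->
  (fun g => u b g) @ within `[0, 1] (nbhs r) --> u b r.
Proof.
move=> r01; apply: exp_loss_cvg => //.
  by have := loss_ge0 lamF b r01; case: (lam r b).
have /subspace_continuousP lam_cont := proj1 (proj2 lamF) b.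
by apply: lam_cont; rewrite /= in_itv.
Qed.

Lemma exp_loss_le_endpoint b (e : R) : 0 <= e <= 1 -> u b e <= u b (b%:R : R).
Proof.
move=> e01; have b01 : 0 <= (b%:R : R) <= 1 by case: b; rewrite /= ?lexx ?ler01.
apply: exp_loss_le => //; first exact: loss_ge0.
by have := lamP b01 e01; case: b {b01}; rewrite /= ?subrr ?subr0 !mul0e ?adde0 ?add0e !mul1e.
Qed.

(* Mixability provides a prediction [g] whose exponentiated losses are the
   mixture [W_b = t V_b + (1 - t) U_b]; properness compares [p] with [g], and
   [U_b / W_b = exp (eta (x_b - lam p b)) >= 1 + eta (x_b - lam p b)]. *)
Lemma mixture_ratio_ge1 (p e t : R) : 0 <= p <= 1 -> 0 <= e <= 1 -> 0 <= t <= 1 ->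
  lam p false \is a fin_num -> lam p true \is a fin_num ->
  lam e false \is a fin_num -> lam e true \is a fin_num ->
  1 <= p * (u true p / (t * u true e + (1 - t) * u true p))
       + (1 - p) * (u false p / (t * u false e + (1 - t) * u false p)).
Proof.
move=> p01 e01 t01 fp0 fp1 fe0 fe1.
have img_u q : 0 <= q <= 1 -> lam q false \is a fin_num -> lam q true \is a fin_num ->
    ((fun xy : R * R => (expR (- eta * xy.1), expR (- eta * xy.2))) @` superpred lam)
    (u false q, u true q).
  move=> q01 fq0 fq1; exists (fine (lam q false), fine (lam q true)).
    split; rewrite /= -?lee_fin ?fineK //; try exact: loss_ge0.
    by split; [exact: loss_ge0 | exists q].
  by rewrite /= !exp_loss_fin.
have [[x y] [/= x0 [y0 [g [g01 [gx gy]]]]] [Wx Wy]] :=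
  lamM (img_u e e01 fe0 fe1) (img_u p p01 fp0 fp1) t01.
have proper_xy :
    p * fine (lam p true) + (1 - p) * fine (lam p false) <= p * y + (1 - p) * x.
  rewrite -lee_fin !EFinD !EFinM !fineK //; apply: le_trans (lamP p01 g01) _.
  by apply: leeD; apply: lee_wpmul2l; rewrite ?lee_fin ?subr_ge0 //; case/andP: p01.
have ratio_ge z l : 1 + eta * (z - l) <= expR (- eta * l) / expR (- eta * z).
  by rewrite -expRB (_ : - eta * l - - eta * z = eta * (z - l)); [exact: expR_ge1Dx | ring].
rewrite -Wx -Wy !exp_loss_fin //.
have [p0 q0] : 0 <= p /\ 0 <= 1 - p by case/andP: p01; rewrite subr_ge0.
have := ler_wpM2l p0 (ratio_ge y (fine (lam p true))).
have := ler_wpM2l q0 (ratio_ge x (fine (lam p false))).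
rewrite -subr_ge0 in proper_xy; have := mulr_ge0 (ltW eta0) proper_xy.
lra.
Qed.

Lemma mix_ratio_le1_interior (p e : R) : 0 < p < 1 -> 0 < e < 1 ->
  p * (u true e / u true p) + (1 - p) * (u false e / u false p) <= 1.
Proof.
move=> /[dup] p_in /andP[p0 p1] /[dup] e_in /andP[e0 e1].
have fin := loss_fin_interior lamF lamP.
apply: mean_ratio_le1; rewrite ?exp_loss_gt0 ?exp_loss_ge0 ?fin ?ltW //.
by move=> t /andP[t0 th]; apply: mixture_ratio_ge1; rewrite ?fin ?ltW //; lra.
Qed.

Lemma mix_ratio_le1 (p e : R) : 0 <= p <= 1 -> 0 <= e <= 1 ->
  p * (u true e / u true p) + (1 - p) * (u false e / u false p) <= 1.
Proof.
move=> p01 e01; have endpoint_gt0 (b : bool) : 0 < u b (b%:R : R).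
  by apply/exp_loss_gt0/(proper_loss_fin lamF lamP); case: b; rewrite /= ?subr0 ?lexx ?ler01.
have [->|p_neq0] := eqVneq p 0.
  rewrite mul0r add0r subr0 mul1r ler_pdivrMr ?mul1r //; first exact: exp_loss_le_endpoint.
  exact: (endpoint_gt0 false).
have [->|p_neq1] := eqVneq p 1.
  rewrite subrr mul0r addr0 mul1r ler_pdivrMr ?mul1r //; first exact: exp_loss_le_endpoint.
  exact: (endpoint_gt0 true).
have p_in : 0 < p < 1 by rewrite !lt_neqAle eq_sym p_neq0 p_neq1.
pose K g := p * (u true g / u true p) + (1 - p) * (u false g / u false p).
have K_cvg : K @ within `[0, 1] (nbhs e) --> K e.
  by apply: cvgD; apply: cvgMr; apply: cvgMl; apply: exp_loss_cvg_within.
exact: interior01_le e01 K_cvg (fun g => mix_ratio_le1_interior p_in).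
Qed.

End MixableProperLoss.

Section SafePrediction.
Variables (R : realType) (N : nat).
Variables (lam : 'I_N -> R -> bool -> \bar R) (eta : 'I_N -> R).
Hypotheses (lamF : forall n, loss_function (lam n)) (lamP : forall n, proper_loss (lam n)).
Hypotheses (eta0 : forall n, 0 < eta n) (lamM : forall n, mixable (eta n) (lam n)).
Variables (W e : 'I_N -> R).
Hypotheses (W_ge0 : forall n, 0 <= W n) (e01 : forall n, 0 <= e n <= 1).

Local Notation u n b g := (exp_loss (eta n) (lam n g b)).
Local Notation mass := (\sum_n W n).

Definition next_mass b g := \sum_n W n * (u n b (e n) / u n b g).

(* The first clause rules out the junk value [_ / 0 = 0] in [next_mass]. *)
Definition safe_pred b g :=
  (forall n, 0 < W n -> 0 < u n b (e n) -> 0 < u n b g) /\ next_mass b g <= mass.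

Lemma next_mass_ge_term n b g : W n * (u n b (e n) / u n b g) <= next_mass b g.
Proof.
rewrite /next_mass (bigD1 n) //= lerDl.
by apply: sumr_ge0 => i _; rewrite mulr_ge0 ?divr_ge0 ?exp_loss_ge0.
Qed.

Lemma mix_next_mass p : 0 <= p <= 1 ->
  p * next_mass true p + (1 - p) * next_mass false p <= mass.
Proof.
move=> p01; rewrite /next_mass !mulr_sumr -big_split /=; apply: ler_sum => n _.
have := mix_ratio_le1 (lamF n) (lamP n) (eta0 n) (@lamM n) p01 (e01 n).
move/(ler_wpM2l (W_ge0 n)).
lra.
Qed.

Lemma exp_loss_pred_gt0 n b p : 0 <= p <= 1 -> 0 < (if b then p else 1 - p) ->
  0 < u n b p.
Proof. by move=> p01 pb; apply/exp_loss_gt0/(proper_loss_fin (lamF n) (lamP n)). Qed.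

Lemma safe_endpoint b : safe_pred b b%:R.
Proof.
have b01 : 0 <= (b%:R : R) <= 1 by case: b; rewrite /= ?lexx ?ler01.
split=> [n _ _|].
  by apply: exp_loss_pred_gt0 => //; case: b {b01}; rewrite /= ?subr0 ltr01.
have := mix_next_mass b01.
by case: b {b01}; rewrite /= ?subrr ?subr0 !(mul0r, mul1r, addr0, add0r).
Qed.

Lemma safe_cover p : 0 <= p <= 1 -> safe_pred false p \/ safe_pred true p.
Proof.
move=> p01.
have [->|p_neq0] := eqVneq p 0; first by left; apply: (safe_endpoint false).
have [->|p_neq1] := eqVneq p 1; first by right; apply: (safe_endpoint true).
have /andP[p0 p1] : 0 < p < 1 by rewrite !lt_neqAle eq_sym p_neq0 p_neq1.
have pos b n : 0 < u n b p by apply: exp_loss_pred_gt0; case: b; rewrite ?subr_gt0.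
have := mix_next_mass p01.
case: (lerP (next_mass false p) mass) => [F0|F0]; first by left; split=> // n.
case: (lerP (next_mass true p) mass) => [F1|F1]; first by right; split=> // n.
have : p * mass < p * next_mass true p by rewrite ltr_pM2l.
have : (1 - p) * mass < (1 - p) * next_mass false p by rewrite ltr_pM2l // subr_gt0.
lra.
Qed.

Lemma next_mass_cvg b a : 0 <= a <= 1 ->
  (forall n, 0 < W n -> 0 < u n b (e n) -> 0 < u n b a) ->
  next_mass b @ within `[0, 1] (nbhs a) --> next_mass b a.
Proof.
move=> a01 pos; apply: cvg_big => [|n _]; first exact: add_continuous.
have [ua_gt0|ua_le0] := ltrP 0 (u n b a).
  apply: cvgMr; apply: cvgMr; apply: cvgV; first by rewrite gt_eqF.
  exact: exp_loss_cvg_within.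
have W_u0 : W n * u n b (e n) = 0.
  apply/eqP; apply: contraTT ua_le0; rewrite mulf_eq0 negb_or -ltNge => /andP[Wn ue].
  by apply: pos; rewrite lt_def ?Wn ?ue ?W_ge0 ?exp_loss_ge0.
under eq_fun do rewrite mulrA W_u0 mul0r.
by rewrite mulrA W_u0 mul0r; exact: cvg_cst.
Qed.

Lemma not_safe_near b a : 0 <= a <= 1 -> ~ safe_pred b a ->
  \forall x \near within `[0, 1] (nbhs a), ~ safe_pred b x.
Proof.
move=> a01 not_safe.
have [pos|] := pselect (forall n, 0 < W n -> 0 < u n b (e n) -> 0 < u n b a).
  have mass_lt : mass < next_mass b a by rewrite ltNge; apply/negP => ?; apply: not_safe.
  apply: filterS (cvgr_gt _ (next_mass_cvg a01 pos) _ mass_lt) => x mass_lt_x [_].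
  by rewrite leNgt mass_lt_x.
(* An expert with positive weight and finite loss, where Learner's loss is infinite:
   near [a] the corresponding ratio blows up. *)
move=> /existsNP[n /not_implyP[Wn /not_implyP[ue /negP]]]; rewrite -leNgt => ua_le0.
have ua0 : u n b a = 0 by apply/eqP; rewrite eq_le ua_le0 exp_loss_ge0.
have eps_gt0 : 0 < W n * u n b (e n) / (mass + 1).
  by rewrite divr_gt0 ?mulr_gt0 // ltr_wpDl ?sumr_ge0.
have u_cvg := exp_loss_cvg_within (b := b) (lamF n) (eta0 n) a01.
rewrite ua0 in u_cvg.
apply: filterS (cvgr_lt _ u_cvg _ eps_gt0) => x ux_lt [pos_x mass_x].
have ux := pos_x n Wn ue.
have := next_mass_ge_term n b x.
rewrite ltr_pdivlMr ?ltr_wpDl ?sumr_ge0 // in ux_lt.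
have : (mass + 1) * u n b x < W n * u n b (e n) by rewrite mulrC.
rewrite -ltr_pdivlMr // -mulrA => mass_lt.
have : 0 <= mass by apply: sumr_ge0.
lra.
Qed.

Lemma exists_safe : exists g, 0 <= g <= 1 /\ safe_pred false g /\ safe_pred true g.
Proof.
apply: closed_cover01_meet; [exact: (safe_endpoint false) | exact: (safe_endpoint true)
  | exact: safe_cover | |] => r r01; exact: not_safe_near.
Qed.

End SafePrediction.

Section DefensiveStrategy.
Variables (R : realType) (N : nat).
Variables (lam : 'I_N -> R -> bool -> \bar R) (eta : 'I_N -> R).

Local Notation u n b g := (exp_loss (eta n) (lam n g b)).

(* The default [0] is only returned when no safe prediction exists, which
   [exists_safe] rules out. *)
Definition safe_choice (W e : 'I_N -> R) : R :=
  xget 0 [set g | 0 <= g <= 1 /\ safe_pred lam eta W e false g /\ safe_pred lam eta W e true g].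

Lemma safe_choice01 W e : 0 <= safe_choice W e <= 1.
Proof.
by rewrite /safe_choice; case: xgetP => [g -> []|_]; rewrite ?lexx ?ler01.
Qed.

Fixpoint weights (g : nat -> 'I_N -> R) (w : nat -> bool) (t : nat) : 'I_N -> R :=
  if t is s.+1 then
    let W := weights g w s in
    fun n => W n * (u n (w s) (g s n) / u n (w s) (safe_choice W (g s)))
  else fun=> 1.

Definition defensive_strategy (h : seq ('I_N -> R)) (ws : seq bool) : R :=
  let g := nth (fun=> 0) h in
  safe_choice (weights g (nth false ws) (size ws)) (g (size ws)).

Lemma eq_weights g g' w w' t : (forall s, (s < t)%N -> g s = g' s /\ w s = w' s) ->
  weights g w t = weights g' w' t.
Proof.
elim: t => [//|t IH] eq_gw /=.
rewrite IH => [|s st]; last exact/eq_gw/ltnW.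
by have [-> ->] := eq_gw t (ltnSn t).
Qed.

Lemma defensive_strategy_pred g w t :
  learner_pred defensive_strategy g w t = safe_choice (weights g w t) (g t).
Proof.
rewrite /learner_pred /defensive_strategy /= size_mkseq nth_mkseq //.
congr safe_choice; apply: eq_weights => s st.
by rewrite !nth_mkseq // ltnW.
Qed.

Section Bounds.
Hypotheses (lamF : forall n, loss_function (lam n)) (lamP : forall n, proper_loss (lam n)).
Hypotheses (eta0 : forall n, 0 < eta n) (lamM : forall n, mixable (eta n) (lam n)).
Variables (g : nat -> 'I_N -> R) (w : nat -> bool).
Hypothesis g01 : forall t n, 0 <= g t n <= 1.

Lemma weights_ge0 t n : 0 <= weights g w t n.
Proof.
elim: t => [|t IH] /=; first exact: ler01.
by rewrite mulr_ge0 ?divr_ge0 ?exp_loss_ge0.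
Qed.

Lemma weights_safe t : safe_pred lam eta (weights g w t) (g t) (w t)
  (safe_choice (weights g w t) (g t)).
Proof.
have [_ [safe0 safe1]] :=
  xgetPex 0 (exists_safe lamF lamP eta0 lamM (weights_ge0 t) (g01 t)).
by case: (w t).
Qed.

Lemma sum_weights_le t : \sum_n weights g w t n <= N%:R.
Proof.
elim: t => [|t IH]; first by rewrite sumr_const card_ord.
by apply: le_trans IH; case: (weights_safe t).
Qed.

Lemma weights_expE t n : (forall s, (s < t)%N -> lam n (g s n) (w s) \is a fin_num) ->
  [/\ forall s, (s < t)%N -> lam n (safe_choice (weights g w s) (g s)) (w s) \is a fin_num,
      0 < weights g w t n &
      weights g w t n = expR (eta n *
        (\sum_(s < t) fine (lam n (safe_choice (weights g w s) (g s)) (w s))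
         - \sum_(s < t) fine (lam n (g s n) (w s))))].
Proof.
elim: t => [|t IH] expert_fin.
  by split=> //; rewrite !big_ord0 subrr mulr0 expR0.
have [learner_fin W_gt0 WE] := IH (fun s st => expert_fin s (ltnW st)).
have ue_gt0 := exp_loss_gt0 (eta n) (expert_fin t (ltnSn t)).
have ug_gt0 := (weights_safe t).1 n W_gt0 ue_gt0.
split.
- move=> s; rewrite ltnS leq_eqVlt => /orP[/eqP -> |]; last exact: learner_fin.
  exact: exp_loss_gt0_fin_num ug_gt0.
- by rewrite /= mulr_gt0 ?divr_gt0.
- rewrite /= WE !big_ord_recr /= !exp_loss_fin ?(exp_loss_gt0_fin_num ug_gt0) ?expert_fin //.
  by rewrite -expRB -expRD; congr expR; ring.
Qed.

Lemma expert_loss_eqy T n s : (s < T)%N -> lam n (g s n) (w s) \isn't a fin_num ->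
  expert_loss lam g w T n = +oo%E.
Proof.
move=> sT loss_inf; rewrite /expert_loss; apply/esum_eqyP.
  by move=> i _; rewrite gt_eqF // (lt_le_trans _ (loss_ge0 (lamF n) _ (g01 i n))).
exists (Ordinal sT); split; rewrite ?mem_index_enum //=.
by move: (loss_ge0 (lamF n) (w s) (g01 s n)) loss_inf; case: (lam n _ _).
Qed.

Lemma learner_loss_le_fin T n : (forall s, (s < T)%N -> lam n (g s n) (w s) \is a fin_num) ->
  (learner_loss lam defensive_strategy g w T n
   <= expert_loss lam g w T n + (ln N%:R / eta n)%:E)%E.
Proof.
move=> expert_fin; have [learner_fin _ WE] := weights_expE expert_fin.
rewrite /learner_loss /expert_loss; under eq_bigr do rewrite defensive_strategy_pred.
have sumE (f : nat -> \bar R) : (forall s, (s < T)%N -> f s \is a fin_num) ->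
    (\sum_(s < T) f s = (\sum_(s < T) fine (f s))%:E)%E.
  by move=> f_fin; rewrite EFin_sum_fine // => i _; apply: f_fin.
rewrite (sumE _ learner_fin) (sumE _ expert_fin) -EFinD lee_fin.
have N_gt0 : (0 < N)%N by apply: leq_ltn_trans (ltn_ord n).
have : weights g w T n <= N%:R.
  apply: le_trans (sum_weights_le T); rewrite (bigD1 n) //= lerDl.
  by apply: sumr_ge0 => i _; apply: weights_ge0.
rewrite WE -[leRHS]lnK ?posrE ?ltr0n // ler_expR -ler_pdivlMl // mulrC.
lra.
Qed.

End Bounds.

End DefensiveStrategy.

Theorem corollary2 (R : realType) (N : nat)
  (lam : 'I_N -> R -> bool -> \bar R) (eta : 'I_N -> R) :
  (forall n, loss_function (lam n)) ->
  (forall n, proper_loss (lam n)) ->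
  (forall n, 0 < eta n) ->
  (forall n, mixable (eta n) (lam n)) ->
  exists S : seq ('I_N -> R) -> seq bool -> R,
    (forall h w, 0 <= S h w <= 1) /\
    forall (g : nat -> 'I_N -> R) (w : nat -> bool),
      (forall t n, 0 <= g t n <= 1) ->
      forall (T : nat) (n : 'I_N),
        (learner_loss lam S g w T n <=
         expert_loss lam g w T n + (ln (N%:R) / eta n)%:E)%E.
Proof.
move=> lamF lamP eta0 lamM; exists (defensive_strategy lam eta).
split=> [h ws|g w g01 T n]; first exact: safe_choice01.
have [expert_fin|] := pselect (forall s, (s < T)%N -> lam n (g s n) (w s) \is a fin_num).
  exact: learner_loss_le_fin.
move=> /existsNP[s /not_implyP[sT /negP loss_inf]].
by rewrite (expert_loss_eqy lamF g01 sT loss_inf) addye ?leey.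
Qed.
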